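(* Let $K$ and $K'$ be two non-degenerate CMIs, with $\mathrm{can}(\mathrm{pur}(K))=(C,\langle\mathbb I_K,\mathbb I_K,P_i,1\le i\le t\rangle)$. Let $K''=R_K^{K'}$ and $\mathrm{can}(\mathrm{pur}(K''))=(C'',\langle\mathbb I_{K''},\mathbb I_{K''},P''_j,1\le j\le r\rangle)$, and let $S=C\cup\bigcup_{i=1}^tP_i$ and $P''=\bigcup_{j=1}^rP''_j$. If $K$ implies $K'$ and $R_K^{K'}\ne(\cdot,\langle\ \rangle)$, then $C\subseteq C''\subseteq S\setminus P''$.
   Context: Setting: $X_1,\dots,X_n$ jointly distributed discrete random variables with $H(X_i)<\infty$; distribution unspecified. $X_\alpha=(X_i,i\in\alpha)$, $X_\emptyset$ constant. A CMI is $K=(C,\langle Q_1,\dots,Q_k\rangle)$, $k\ge0$, $C\subseteq\{1,\dots,n\}$, $\langle\cdot\rangle$ an unordered multiset of subsets; valid (for a given distribution) if $\sum_iH(X_{Q_i}|X_C)-H(X_{Q_1},\dots,X_{Q_k}|X_C)=0$. Empty members may be deleted. Degenerate = valid for every distribution, written $(\cdot,\langle\ \rangle)$. ''$K$ implies $K'$'': for every joint distribution, if $K$ is valid then $K'$ is valid. $\mathrm{pur}(K)=(C,\langle Q_i\setminus C:Q_i\setminus C\ne\emptyset\rangle)$. For pure $K$: $\mathbb I_K$ = indices lying in at least two members of the collection if $k\ge2$, else $\emptyset$; $P_1,\dots,P_t$ the nonempty sets among $Q_i\setminus\mathbb I_K$; $\mathrm{can}(K)=(\cdot,\langle\ \rangle)$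 if $k\le1$, $(C,\langle\mathbb I_K,\mathbb I_K\rangle)$ if $k\ge2,\mathbb I_K\ne\emptyset,t\le1$, $(C,\langle P_1..P_t\rangle)$ if $k\ge2,\mathbb I_K=\emptyset$, $(C,\langle\mathbb I_K,\mathbb I_K,P_1..P_t\rangle)$ if $k\ge2,\mathbb I_K\ne\emptyset,t\ge2$. For general $K$, $\mathbb I_K$ is the repeated-index set of $\mathrm{pur}(K)$; general-form notation omits the copies of $\mathbb I_K$ when empty and uses $t=0$ for $(C,\langle\mathbb I_K,\mathbb I_K\rangle)$. $R_K^{K'}$: with $\mathrm{can}(\mathrm{pur}(K'))=(C',\langle\mathbb I_{K'},\mathbb I_{K'},P'_j,1\le j\le s\rangle)$, $D=\mathbb I_{K'}\setminus\mathbb I_K$ and $T_1,\dots,T_u$ the nonempty sets among $P'_j\setminus\mathbb I_K$: $R_K^{K'}=(\cdot,\langle\ \rangle)$ if $D=\emptyset,u\le1$; $(C'\setminus\mathbb I_K,\langle T_1..T_u\rangle)$ if $D=\emptyset,u\ge2$; $(C'\setminus\mathbb I_K,\langle D,D\rangle)$ if $D\ne\emptyset,u\le1$; $(C'\setminus\mathbb I_K,\langle D,D,T_1..T_u\rangle)$ if $D\ne\emptyset,u\ge2$. *)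

From HB Require Import structures.
From mathcomp Require Import all_boot all_order all_algebra.
From mathcomp Require Import all_classical all_reals.
From mathcomp Require Import ereal esum exp.
From mathcomp Require Import Rstruct.
From Stdlib Require Rdefinitions.
Notation R := Rdefinitions.R.


Set Implicit Arguments.
Unset Strict Implicit.
Unset Printing Implicit Defensive.
Import Order.TTheory GRing.Theory Num.Theory.

Local Open Scope ring_scope.
Local Open Scope classical_set_scope.

(* Jointly distributed discrete random variables X_1..X_n : WLOG each takes  *)
(* values in nat (any countable alphabet), so a joint distribution is a pmf  *)
(* on outcomes x : {ffun 'I_n -> nat}.                                        *)

Definition outcome (n : nat) := {ffun 'I_n -> nat}.

Definition is_pmf (n : nat) (p : outcome n -> R) : Prop :=
  (forall x, 0 <= p x) /\ (\esum_(x in [set: outcome n]) (p x)%:E = 1%E).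

Definition marg (n : nat) (p : outcome n -> R) (alpha : {set 'I_n})
  (y : outcome n) : R :=
  fine (\esum_(x in [set x : outcome n | forall i, i \in alpha -> x i = y i])
          (p x)%:E).

(* canonical representatives of the values of X_alpha: coordinates outside
   alpha are set to 0 *)
Definition reps (n : nat) (alpha : {set 'I_n}) : set (outcome n) :=
  [set y | forall i, i \notin alpha -> y i = 0%N].

Definition negxlnx (t : R) : R := - (t * ln t).

Definition entropyE (n : nat) (p : outcome n -> R) (alpha : {set 'I_n})
  : \bar R :=
  \esum_(y in reps alpha) (negxlnx (marg p alpha y))%:E.

Definition finite_entropies (n : nat) (p : outcome n -> R) : Prop :=
  forall i : 'I_n, (entropyE p [set i] < +oo)%E.

Definition H (n : nat) (p : outcome n -> R) (alpha : {set 'I_n}) : R :=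
  fine (entropyE p alpha).

Definition condH (n : nat) (p : outcome n -> R) (A C : {set 'I_n}) : R :=
  H p (A :|: C) - H p C.

Definition distribution (n : nat) (p : outcome n -> R) : Prop :=
  is_pmf p /\ finite_entropies p.

Local Close Scope classical_set_scope.
Local Close Scope ring_scope.
Local Open Scope nat_scope.

(* CMIs: K = (C, <Q_1,...,Q_k>); the multiset is represented by a sequence,  *)
(* every definition below being invariant under permutation of it.          *)

Definition CMI (n : nat) : Type := ({set 'I_n} * seq {set 'I_n})%type.

Definition valid (n : nat) (K : CMI n) (p : outcome n -> R) : Prop :=
  (\sum_(Q <- K.2) condH p Q K.1
   - condH p (\bigcup_(Q <- K.2) Q) K.1)%R = 0%R.

Definition cmi_implies (n : nat) (K K' : CMI n) : Prop :=
  forall p, distribution p -> valid K p -> valid K' p.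

Definition degenerate (n : nat) (K : CMI n) : Prop :=
  forall p, distribution p -> valid K p.

Definition pur (n : nat) (K : CMI n) : CMI n :=
  (K.1, [seq Q :\: K.1 | Q <- K.2 & Q :\: K.1 != finset.set0]).

Definition rep_set (n : nat) (K : CMI n) : {set 'I_n} :=
  if (2 <= size K.2)%N
  then [set i : 'I_n | (2 <= count (fun Q : {set 'I_n} => i \in Q) K.2)%N]
  else finset.set0.

Definition IK (n : nat) (K : CMI n) : {set 'I_n} := rep_set (pur K).

Definition Pseq (n : nat) (K : CMI n) : seq {set 'I_n} :=
  [seq Q :\: rep_set K | Q <- K.2 & Q :\: rep_set K != finset.set0].

(* canonical form of a pure CMI; None stands for the degenerate (.,< >) *)
Definition can (n : nat) (K : CMI n) : option (CMI n) :=
  let I := rep_set K in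
  let Ps := Pseq K in
  if (size K.2 <= 1)%N then None
  else if I == finset.set0 then Some (K.1, Ps)
  else if (size Ps <= 1)%N then Some (K.1, [:: I; I])
  else Some (K.1, I :: I :: Ps).

(* Components of can(pur(K)) written in general form
   (C, <I_K, I_K, P_1, ..., P_t>) : the condition set, and the list P_1..P_t
   (t = 0 for the form (C,<I_K,I_K>) and for the degenerate case). *)
Definition canC (n : nat) (K : CMI n) : {set 'I_n} := (pur K).1.

Definition canP (n : nat) (K : CMI n) : seq {set 'I_n} :=
  let K0 := pur K in
  if (size K0.2 <= 1)%N then [::]
  else if (rep_set K0 != finset.set0) && (size (Pseq K0) <= 1)%N then [::]
  else Pseq K0.

(* R_K^{K'}; None stands for (.,< >) *)
Definition RKK (n : nat) (K K' : CMI n) : option (CMI n) :=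
  let IKK := IK K in
  let C' := canC K' in
  let D := IK K' :\: IKK in
  let T := [seq P :\: IKK | P <- canP K' & P :\: IKK != finset.set0] in
  if D == finset.set0 then
    (if (size T <= 1)%N then None else Some (C' :\: IKK, T))
  else if (size T <= 1)%N then Some (C' :\: IKK, [:: D; D])
  else Some (C' :\: IKK, D :: D :: T).

(* The inclusions are witnessed by two families of test distributions whose
   entropies are [ln 2] times an integer rank function: one fair bit copied onto
   every variable of a set W (rank: whether alpha meets W), and two independent
   fair bits at t1, t2 with their xor at a third index j (rank: min 2 of the
   number of these three indices in alpha).  Validity of a CMI under such a
   distribution becomes a counting condition on how its members meet W, resp.
   {t1, t2, j}.
   A bit copied onto one index of I_K' \ I_K satisfies K but not K', so
   I_K' is contained in I_K and K'' = (C' \ I_K, <T_1, ..., T_u>) with u >= 2;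
   two of the T's give indices t1 <> t2 outside C' and I_K that together hit two
   members of K'.  A bit copied onto {c, t1, t2} with c in C \ C' would satisfy
   K but not K', so C is contained in C'.  Finally, for x in C'' \ S, the xor of
   t1 and t2 placed at x satisfies K, as x lies in no P_i, but not K', because
   conditioning on x couples the two members of K' hit by t1 and t2. *)

From HB Require Import structures.
From mathcomp Require Import all_boot all_order all_algebra.
From mathcomp Require Import all_classical all_reals.
From mathcomp Require Import ereal esum exp.
From mathcomp Require Import Rstruct.

Set Implicit Arguments.
Unset Strict Implicit.
Unset Printing Implicit Defensive.
Import Order.TTheory GRing.Theory Num.Theory.
Local Open Scope ring_scope.

Lemma esum_big_seq (T : choiceType) (I : set T) (a : T -> \bar R) (r : seq T) :
  uniq r -> (forall x, I x -> (0 <= a x)%E) ->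
  (forall x, I x -> x \notin r -> a x = 0%E) ->
  (\esum_(x in I) a x = \sum_(x <- r | x \in I) a x)%E.
Proof.
move=> ur a_ge0 a_out; rewrite big_mkcond.
rewrite esum_mkcond (esumID [set` r]); last first.
  by move=> x _; case: ifP => // /set_mem /a_ge0.
rewrite [X in (_ + X)%E]esum1 ?adde0 ?setTI; last first.
  by move=> x /= /negP xr; case: ifPn => // /set_mem Ix; exact: a_out.
rewrite esum_fset; [exact/esym/fsbig_seq | exact: finite_seq |].
by move=> x _; case: ifP => // /set_mem /a_ge0.
Qed.

Lemma sum_nat_of_bool_count (T : Type) (s : seq T) (P : pred T) :
  (\sum_(x <- s) P x)%N = count P s.
Proof. by rewrite -sumn_count sumnE big_map. Qed.

Lemma size_undup_map_mul (T U : eqType) (f : T -> U) (s : seq T) (m : nat) :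
  (forall x, x \in s -> count (fun x' => f x' == f x) s = m) ->
  (size (undup (map f s)) * m)%N = size s.
Proof.
move=> fibre; rewrite -(size_map f) -(perm_size (perm_count_undup (map f s))).
rewrite size_flatten /shape -map_comp sumnE big_map big_seq.
rewrite (eq_bigr (fun=> m)) => [|y]; last first.
  by rewrite mem_undup => /mapP[x xs ->] /=; rewrite size_nseq count_map -(fibre x xs).
by rewrite -big_seq big_const_seq count_predT iter_addn_0 mulnC.
Qed.

Lemma mem_bigcup_seq (T : finType) (s : seq {set T}) x :
  (x \in \bigcup_(Q <- s) Q) = has (fun Q : {set T} => x \in Q) s.
Proof. by elim: s => [|Q s IH]; rewrite ?big_nil ?big_cons inE ?IH. Qed.

Lemma bigcup_seqI_neq0 (T : finType) (s : seq {set T}) (W : {set T}) :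
  ((\bigcup_(Q <- s) Q) :&: W != finset.set0) = has (fun Q => Q :&: W != finset.set0) s.
Proof.
apply/set0Pn/hasP => [[x] | [Q Q_s /set0Pn[x]]]; rewrite !inE.
  case/andP; rewrite mem_bigcup_seq => /hasP[Q Q_s x_Q] x_W; exists Q => //.
  by apply/set0Pn; exists x; rewrite inE x_Q.
case/andP=> x_Q x_W; exists x; rewrite inE x_W mem_bigcup_seq andbT.
by apply/hasP; exists Q.
Qed.

Lemma count_le1E (T : Type) (a : pred T) (s : seq T) :
  (count a s <= 1)%N = (count a s == has a s).
Proof. by rewrite has_count; case: (count a s) => [|[|k]]. Qed.

Lemma setI_set1_neq0 (T : finType) (Q : {set T}) d :
  (Q :&: [set d] != finset.set0) = (d \in Q).
Proof.
apply/set0Pn/idP => [[i] | dQ]; first by rewrite !inE => /andP[iQ /eqP <-].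
by exists d; rewrite !inE dQ eqxx.
Qed.

Definition project n (al : {set 'I_n}) (x : outcome n) : outcome n :=
  [ffun i => if i \in al then x i else 0%N].

Lemma project_reps n (al : {set 'I_n}) (x : outcome n) : reps al (project al x).
Proof. by move=> i /negbTE i_al; rewrite ffunE i_al. Qed.

Lemma project_setT n (x : outcome n) : project [set: 'I_n] x = x.
Proof. by apply/ffunP => i; rewrite ffunE inE. Qed.

Section UniformOnList.
Variables (n : nat) (L : seq (outcome n)).
Hypotheses (L_uniq : uniq L) (L_gt0 : (0 < size L)%N).

Definition unif (x : outcome n) : R := (x \in L)%:R / (size L)%:R.

Lemma unif_ge0 x : 0 <= unif x.
Proof. by rewrite divr_ge0 ?ler0n. Qed.

Lemma esum_unif (I : set (outcome n)) :
  (\esum_(x in I) (unif x)%:E = ((count (mem I) L)%:R / (size L)%:R)%:E)%E.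
Proof.
rewrite (esum_big_seq L_uniq) => [||x _]; first last.
- by rewrite /unif => /negbTE ->; rewrite mul0r.
- by move=> x _; rewrite lee_fin unif_ge0.
rewrite sumEFin big_seq_cond (eq_bigr (fun=> (size L)%:R^-1)) => [|x /andP[xL _]]; last first.
  by rewrite /unif xL mul1r.
rewrite big_const_seq iter_addr_0 [in RHS]mulrC mulr_natr (@eq_in_count _ _ (mem I)) //.
by move=> x /= ->.
Qed.

Lemma is_pmf_unif : is_pmf unif.
Proof.
split; first exact: unif_ge0.
rewrite esum_unif (@eq_count _ _ predT) ?count_predT ?divff ?pnatr_eq0 -?lt0n //.
by move=> x; apply/mem_set.
Qed.

Lemma marg_unif (al : {set 'I_n}) (y : outcome n) : reps al y ->
  marg unif al y = (count (fun x => project al x == y) L)%:R / (size L)%:R.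
Proof.
move=> y_rep; rewrite /marg esum_unif /=; congr (_%:R / _); apply: eq_count => x /=.
apply/idP/eqP => [/set_mem x_al | <-]; last by apply/mem_set => i i_al; rewrite ffunE i_al.
by apply/ffunP => i; rewrite ffunE; case: ifPn => [/x_al | /y_rep].
Qed.

Lemma entropyE_unif (al : {set 'I_n}) (m : nat) :
  (forall x, x \in L -> count (fun x' => project al x' == project al x) L = m) ->
  entropyE unif al = (ln (size L)%:R - ln m%:R)%:E.
Proof.
move=> fibre; set image := undup (map (project al) L).
have size_L : (size image * m)%N = size L := size_undup_map_mul fibre.
have [image_gt0 m_gt0] : (0 < size image)%N /\ (0 < m)%N.
  by apply/andP; rewrite -muln_gt0 size_L.
have marg_image y : y \in image -> marg unif al y = m%:R / (size L)%:R.
  by rewrite mem_undup => /mapP[x xL ->]; rewrite marg_unif ?fibre //; exact: project_reps.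
rewrite /entropyE (esum_big_seq (undup_uniq (map (project al) L))); first last.
- move=> y y_rep y_im; rewrite marg_unif // (@eq_in_count _ _ pred0) ?count_pred0.
    by rewrite mul0r /negxlnx mul0r oppr0.
  by move=> x xL /=; apply: contraNF y_im => /eqP <-; rewrite mem_undup map_f.
- move=> y y_rep; rewrite lee_fin /negxlnx oppr_ge0 marg_unif //.
  apply: mulr_ge0_le0; first by rewrite divr_ge0 ?ler0n.
  by apply: ln_le0; rewrite ler_pdivrMr ?ltr0n // mul1r ler_nat count_size.
rewrite big_seq_cond (eq_bigr (fun=> (negxlnx (m%:R / (size L)%:R))%:E)); last first.
  by move=> y /andP[/marg_image ->].
rewrite sumEFin big_const_seq iter_addr_0 (@eq_in_count _ _ predT) ?count_predT; last first.
    by move=> y; rewrite mem_undup => /mapP[x xL ->]; rewrite map_f //=; apply/mem_set/project_reps.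
congr EFin; rewrite -size_L natrM.
have -> : m%:R / ((size image)%:R * m%:R) = (size image)%:R^-1 :> R.
  by rewrite invfM mulrCA mulfV ?mulr1 ?pnatr_eq0 -?lt0n.
rewrite /negxlnx lnV ?posrE ?ltr0n // lnM ?posrE ?ltr0n // addrK mulrN opprK.
by rewrite -(mulr_natl (_ * _)) mulrA mulfV ?mul1r // pnatr_eq0 -lt0n.
Qed.
End UniformOnList.

Lemma unif_rank n (L : seq (outcome n)) (k : nat) (g : {set 'I_n} -> nat) :
  uniq L -> size L = (2 ^ k)%N -> (forall al, g al <= k)%N ->
  (forall (al : {set 'I_n}) x, x \in L ->
     count (fun x' => project al x' == project al x) L = (2 ^ (k - g al))%N) ->
  distribution (unif L) /\ forall al, H (unif L) al = ln 2 * (g al)%:R.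
Proof.
move=> L_uniq size_L g_le fibre.
have L_gt0 : (0 < size L)%N by rewrite size_L expn_gt0.
have entropy al : entropyE (unif L) al = (ln 2 * (g al)%:R)%:E.
  rewrite (entropyE_unif L_uniq L_gt0 (fibre al)) size_L !natrX !lnXn ?ltr0n //.
  by rewrite -mulrnBr ?leq_subr // subKn // mulr_natr.
split; last by move=> al; rewrite /H entropy.
by split; [exact: is_pmf_unif | move=> i; rewrite entropy ltry].
Qed.

Lemma valid_rank n (K : CMI n) (p : outcome n -> R) (g : {set 'I_n} -> nat) :
  (forall al, H p al = ln 2 * (g al)%:R) ->
  {homo g : A B / A \subset B >-> (A <= B)%N} ->
  valid K p <-> (\sum_(Q <- K.2) (g (Q :|: K.1) - g K.1) =
                 g (\bigcup_(Q <- K.2) Q :|: K.1) - g K.1)%N.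
Proof.
move=> H_rank g_homo.
have condH_rank A : condH p A K.1 = ln 2 * (g (A :|: K.1) - g K.1)%N%:R.
  by rewrite /condH !H_rank -mulrBr -natrB // g_homo // finset.subsetUr.
have ln2_neq0 : ln 2 != 0 :> R by rewrite ln_eq0 ?ltr0n // pnatr_eq1.
rewrite /valid (eq_bigr _ (fun Q _ => condH_rank Q)) condH_rank -mulr_sumr -natr_sum.
rewrite -mulrBr; split => [/eqP | ->]; last by rewrite subrr mulr0.
by rewrite mulf_eq0 (negbTE ln2_neq0) subr_eq0 eqr_nat => /eqP.
Qed.

Section CopiedBit.
Variables (n : nat) (W : {set 'I_n}).
Hypothesis W_neq0 : W != finset.set0.

Definition copy_bit (b : bool) : outcome n := [ffun i => if i \in W then b : nat else 0%N].

Definition copy_dist := unif [:: copy_bit false; copy_bit true].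

Lemma project_copy_bit (al : {set 'I_n}) b b' :
  (project al (copy_bit b) == project al (copy_bit b')) = (b == b') || (al :&: W == finset.set0).
Proof.
have [<- | /negbTE neq_bb'] := eqVneq b b'; first by rewrite eqxx.
apply/eqP/eqP => [/ffunP same | /setP disj]; last first.
  apply/ffunP => i; rewrite !ffunE; case: ifP => // i_al.
  by have := disj i; rewrite !inE i_al; case: (i \in W).
apply/setP => i; rewrite !inE; apply/negbTE/andP => -[i_al i_W].
by have := same i; rewrite !ffunE i_al i_W => /(congr1 odd); rewrite !oddb => /eqP; rewrite neq_bb'.
Qed.

Definition copy_rank (al : {set 'I_n}) : nat := al :&: W != finset.set0.

Lemma copy_dist_rank :
  distribution copy_dist /\ forall al, H copy_dist al = ln 2 * (copy_rank al)%:R.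
Proof.
apply: (unif_rank (k := 1)) => [||al|al x] //; last first.
- by rewrite /copy_rank !inE => /orP[] /eqP ->; rewrite /= !project_copy_bit /=;
    case: (al :&: W == finset.set0).
- by rewrite /copy_rank; case: (_ :&: _ != _).
have := project_copy_bit [set: 'I_n] false true.
by rewrite /= !project_setT andbT inE finset.setTI (negbTE W_neq0) => ->.
Qed.

Lemma copy_rank_homo : {homo copy_rank : A B / A \subset B >-> (A <= B)%N}.
Proof.
move=> A B /finset.setSI AB; rewrite /copy_rank.
case: (boolP (A :&: W != _)) => // /set0Pn[x /(fintype.subsetP (AB W)) x_BW].
by rewrite lt0b; apply/set0Pn; exists x.
Qed.

Variable K : CMI n.

Lemma copy_dist_valid_meet : K.1 :&: W != finset.set0 -> valid K copy_dist.
Proof.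
move=> CW; have [_ H_copy] := copy_dist_rank.
apply/(valid_rank _ H_copy copy_rank_homo).
have rank_C A : copy_rank (A :|: K.1) = copy_rank K.1.
  by rewrite /copy_rank finset.setIUl finset.setU_eq0 negb_and CW orbT.
by rewrite rank_C subnn big1_seq // => Q _; rewrite rank_C subnn.
Qed.

Lemma copy_dist_validE : K.1 :&: W = finset.set0 ->
  valid K copy_dist <-> (count (fun Q => Q :&: W != finset.set0) K.2 <= 1)%N.
Proof.
move=> CW; have [_ H_copy] := copy_dist_rank.
rewrite (valid_rank _ H_copy copy_rank_homo).
have rank_C A : copy_rank (A :|: K.1) = copy_rank A.
  by rewrite /copy_rank finset.setIUl CW finset.setU0.
have -> : copy_rank K.1 = 0%N by rewrite /copy_rank CW eqxx.
under eq_bigr do rewrite subn0 rank_C.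
by rewrite subn0 rank_C /copy_rank bigcup_seqI_neq0 sum_nat_of_bool_count count_le1E; split => /eqP.
Qed.
End CopiedBit.

Section XorBits.
Variables (n : nat) (t1 t2 j : 'I_n).
Hypotheses (t12 : t1 != t2) (t1j : t1 != j) (t2j : t2 != j).

Definition xor_bits (b1 b2 : bool) : outcome n :=
  [ffun i => if i == t1 then b1 : nat else if i == t2 then b2 : nat
             else if i == j then b1 (+) b2 : nat else 0%N].

Definition xor_dist := unif
  [:: xor_bits false false; xor_bits false true; xor_bits true false; xor_bits true true].

Definition xor_rank (al : {set 'I_n}) : nat :=
  minn 2 ((t1 \in al) + (t2 \in al) + (j \in al)).

Lemma project_xor_bits (al : {set 'I_n}) b1 b2 c1 c2 :
  (project al (xor_bits b1 b2) == project al (xor_bits c1 c2)) =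
  [&& (t1 \in al) ==> (b1 == c1), (t2 \in al) ==> (b2 == c2)
    & (j \in al) ==> (b1 (+) b2 == c1 (+) c2)].
Proof.
apply/eqP/and3P => [/ffunP same | [/implyP e1 /implyP e2 /implyP e3]].
  have [t2t1 jt1 jt2] : [/\ (t2 == t1) = false, (j == t1) = false & (j == t2) = false].
    by split; apply/negbTE; rewrite eq_sym.
  split; apply/implyP => i_al; apply/eqP.
  - by have := same t1; rewrite !ffunE i_al eqxx => /(congr1 odd); rewrite !oddb.
  - by have := same t2; rewrite !ffunE i_al t2t1 eqxx => /(congr1 odd); rewrite !oddb.
  - by have := same j; rewrite !ffunE i_al jt1 jt2 eqxx => /(congr1 odd); rewrite !oddb.
apply/ffunP => i; rewrite !ffunE; case: ifP => //.
case: (eqVneq i t1) => [-> /e1/eqP -> // | _].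
case: (eqVneq i t2) => [-> /e2/eqP -> // | _].
by case: (eqVneq i j) => [-> /e3/eqP -> | _].
Qed.

Lemma xor_dist_rank :
  distribution xor_dist /\ forall al, H xor_dist al = ln 2 * (xor_rank al)%:R.
Proof.
apply: (unif_rank (k := 2)) => [||al|al x] //; last first.
- rewrite /xor_rank !inE => /or4P[] /eqP ->; rewrite /= !project_xor_bits;
  by case: (t1 \in al); case: (t2 \in al); case: (j \in al).
- exact: geq_minl.
have xor_bits_inj b1 b2 c1 c2 : (xor_bits b1 b2 == xor_bits c1 c2) = (b1 == c1) && (b2 == c2).
  have := project_xor_bits [set: 'I_n] b1 b2 c1 c2; rewrite !project_setT !inE /= => ->.
  by case: b1; case: b2; case: c1; case: c2.
by rewrite /= !inE !xor_bits_inj.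
Qed.

Let hits (Q : {set 'I_n}) := [|| t1 \in Q, t2 \in Q | j \in Q].

Lemma xor_rank_homo : {homo xor_rank : A B / A \subset B >-> (A <= B)%N}.
Proof.
move=> A B /fintype.subsetP AB.
have mono i : ((i \in A) <= (i \in B))%N by case: (boolP (i \in A)) => // /AB ->.
by rewrite /xor_rank leq_min geq_minl geq_min !leq_add ?mono ?orbT.
Qed.

Lemma xor_rank_setUr A B : ~~ hits B -> xor_rank (A :|: B) = xor_rank A.
Proof. by rewrite /xor_rank !inE => /norP[/negbTE-> /norP[/negbTE-> /negbTE->]]; rewrite !orbF. Qed.

Lemma xor_rank_eq0 B : ~~ hits B -> xor_rank B = 0%N.
Proof. by rewrite /xor_rank => /norP[/negbTE-> /norP[/negbTE-> /negbTE->]]. Qed.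

Lemma hits_bigcup (s : seq {set 'I_n}) : hits (\bigcup_(Q <- s) Q) = has hits s.
Proof. by rewrite /hits !mem_bigcup_seq -!has_predU. Qed.

Variable K : CMI n.

Lemma xor_dist_invalid : t1 \notin K.1 -> t2 \notin K.1 -> j \in K.1 ->
  (1 < count (fun Q : {set 'I_n} => (t1 \in Q) || (t2 \in Q)) K.2)%N -> ~ valid K xor_dist.
Proof.
move=> t1C t2C jC hit; have [_ H_xor] := xor_dist_rank.
rewrite (valid_rank _ H_xor xor_rank_homo).
have rank_C A : (xor_rank (A :|: K.1) - xor_rank K.1)%N = (t1 \in A) || (t2 \in A).
  rewrite /xor_rank !inE (negbTE t1C) (negbTE t2C) jC !orbF !orbT.
  by case: (t1 \in A); case: (t2 \in A).
rewrite rank_C (eq_bigr _ (fun Q _ => rank_C Q)) sum_nat_of_bool_count !mem_bigcup_seq => E.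
by move: hit; rewrite E; case: (_ || _).
Qed.

Hypotheses (t1C : t1 \notin K.1) (t2C : t2 \notin K.1) (jC : j \notin K.1).

Lemma xor_dist_validE :
  valid K xor_dist <-> (\sum_(Q <- K.2) xor_rank Q)%N = xor_rank (\bigcup_(Q <- K.2) Q).
Proof.
have [_ H_xor] := xor_dist_rank.
have C_miss : ~~ hits K.1 by rewrite /hits (negbTE t1C) (negbTE t2C) (negbTE jC).
rewrite (valid_rank _ H_xor xor_rank_homo) xor_rank_eq0 // !xor_rank_setUr // subn0.
by under eq_bigr do rewrite subn0 xor_rank_setUr //.
Qed.

Lemma xor_dist_valid_hit1 : (count hits K.2 <= 1)%N -> valid K xor_dist.
Proof.
move=> hit1; apply/xor_dist_validE; elim: K.2 hit1 => [|Q s IH] /=.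
  by rewrite !big_nil xor_rank_eq0 // /hits !inE.
rewrite !big_cons; case: (boolP (hits Q)) => [hit_Q | miss_Q] /=; last first.
  by rewrite xor_rank_eq0 // finset.setUC xor_rank_setUr // => /IH.
rewrite add1n ltnS leqNgt -has_count => miss_s.
rewrite xor_rank_setUr ?hits_bigcup // big_seq big1 ?addn0 // => Q' Q'_s.
by apply: xor_rank_eq0; apply: contra miss_s => hit_Q'; apply/hasP; exists Q'.
Qed.

Lemma xor_dist_valid_spread : ~~ has (fun Q : {set 'I_n} => j \in Q) K.2 ->
  (count (fun Q : {set 'I_n} => t1 \in Q) K.2 <= 1)%N ->
  (count (fun Q : {set 'I_n} => t2 \in Q) K.2 <= 1)%N ->
  valid K xor_dist.
Proof.
move=> /hasPn j_miss t1_1 t2_1; apply/xor_dist_validE.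
have rank_nj (A : {set 'I_n}) : j \notin A -> xor_rank A = ((t1 \in A) + (t2 \in A))%N.
  by rewrite /xor_rank => /negbTE->; case: (t1 \in A); case: (t2 \in A).
rewrite rank_nj ?mem_bigcup_seq ?(introN hasP) //; last by case=> Q /j_miss /negP.
rewrite big_seq (eq_bigr _ (fun Q Q_K => rank_nj Q (j_miss Q Q_K))) -big_seq big_split /=.
by move: t1_1 t2_1; rewrite !sum_nat_of_bool_count !count_le1E => /eqP-> /eqP->.
Qed.
End XorBits.

Section Diffs.
Variable T : finType.
Implicit Types (A B Q : {set T}) (s : seq {set T}).

Definition diffs B s : seq {set T} := [seq Q :\: B | Q <- s & Q :\: B != finset.set0].

Lemma diffs_cons B Q s :
  diffs B (Q :: s) = if Q :\: B != finset.set0 then Q :\: B :: diffs B s else diffs B s.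
Proof. by rewrite /diffs /=; case: ifP. Qed.

Lemma count_diffs (a : pred {set T}) B s :
  (forall Q, a (Q :\: B) = a Q) -> a finset.set0 = false -> count a (diffs B s) = count a s.
Proof.
move=> aB a0; rewrite count_map count_filter; apply: eq_count => Q /=.
by rewrite aB; case: eqP => [QB | _]; rewrite ?andbT // andbF -aB QB a0.
Qed.

Lemma count_diffs_mem z B s : z \notin B ->
  count (fun Q => z \in Q) (diffs B s) = count (fun Q => z \in Q) s.
Proof. by move=> zB; apply: count_diffs => [Q|]; rewrite ?finset.in_setD ?zB ?inE. Qed.

Lemma mem_diffs_notin z B s Q : z \in B -> Q \in diffs B s -> z \notin Q.
Proof. by move=> zB /mapP[Q' _ ->]; rewrite finset.in_setD zB. Qed.

Lemma count_diffs_in z B s : z \in B ->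
  count (fun Q : {set T} => z \in Q) (diffs B s) = 0%N.
Proof.
move=> zB; apply/eqP; rewrite -leqn0 leqNgt -has_count; apply/hasPn => Q.
exact: mem_diffs_notin.
Qed.

Lemma diffs_diffs A B s : diffs B (diffs A s) = diffs (A :|: B) s.
Proof.
elim: s => [|Q s IH] //; rewrite !diffs_cons -finset.setDDl.
case: (boolP (Q :\: A != _)) => [_ | /negPn/eqP->]; first by rewrite diffs_cons IH.
by rewrite finset.set0D eqxx IH.
Qed.

Lemma hitting_pair_diffs B s : (1 < size (diffs B s))%N ->
  exists t1 t2, [/\ t1 \notin B, t2 \notin B &
    (1 < count (fun Q => (t1 \in Q) || (t2 \in Q)) s)%N].
Proof.
rewrite size_map; set P := fun Q => Q :\: B != finset.set0 => size_gt1.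
have count_le a : (count a (seq.filter P s) <= count a s)%N.
  by rewrite count_filter; apply: sub_count => Q /andP[].
have := filter_all P s.
case: (seq.filter P s) size_gt1 count_le => [|Q1 [|Q2 r]] // _ count_le.
case/and3P => /set0Pn[t1 +] /set0Pn[t2 +] _.
rewrite !finset.in_setD => /andP[t1B t1Q] /andP[t2B t2Q].
by exists t1, t2; split => //; apply: leq_trans (count_le _); rewrite /= t1Q t2Q orbT.
Qed.
End Diffs.

Lemma mem_rep_set n (K : CMI n) z :
  (z \in rep_set K) = (1 < count (fun Q : {set 'I_n} => z \in Q) K.2)%N.
Proof.
rewrite /rep_set; case: ifPn => [_ | ]; first by rewrite inE.
rewrite -ltnNge ltnS inE => size_le1; apply/esym/negbTE; rewrite -leqNgt.
exact: leq_trans (count_size _ _) size_le1.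
Qed.

Section CanonicalForm.
Variables (n : nat) (K : CMI n).

Lemma purE : pur K = (K.1, diffs K.1 K.2). Proof. by []. Qed.

Lemma mem_IK z :
  (z \in IK K) = (z \notin K.1) && (1 < count (fun Q : {set 'I_n} => z \in Q) K.2)%N.
Proof.
rewrite /IK mem_rep_set purE /=.
by case: (boolP (z \in K.1)) => zC; rewrite ?(count_diffs_in _ zC) ?(count_diffs_mem _ zC).
Qed.

Lemma Pseq_pur : Pseq (pur K) = diffs (K.1 :|: IK K) K.2.
Proof. exact: diffs_diffs. Qed.

Lemma canP_cases : canP K = [::] \/ canP K = diffs (K.1 :|: IK K) K.2.
Proof. by rewrite /canP -Pseq_pur; case: ifP => _; [left | case: ifP => _; [left | right]]. Qed.

Lemma canP_avoid x : x \in \bigcup_(P <- canP K) P -> x \notin K.1.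
Proof.
rewrite mem_bigcup_seq; case: canP_cases => -> //= /hasP[P P_diffs].
by apply: contraTN => xC; apply: mem_diffs_notin P_diffs; rewrite finset.in_setU xC.
Qed.

Lemma count_canP_nil (a : pred {set 'I_n}) : canP K = [::] ->
  (forall Q, a (Q :\: (K.1 :|: IK K)) = a Q) -> a finset.set0 = false ->
  (count a K.2 <= 1)%N.
Proof.
move=> canP_nil aCI a0.
have aC Q : a (Q :\: K.1) = a Q.
  by rewrite -aCI finset.setDDl finset.setUA finset.setUid aCI.
move: canP_nil; rewrite /canP; case: ifPn => [size_le1 _ | _].
  by rewrite -(count_diffs _ aC a0); apply: leq_trans (count_size _ _) size_le1.
rewrite -(count_diffs _ aCI a0) -Pseq_pur.
case: ifPn => [/andP[_ size_le1] _ | _ ->] //.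
exact: leq_trans (count_size _ _) size_le1.
Qed.
End CanonicalForm.

Lemma xor_dist_valid_canP n (K : CMI n) (t1 t2 j : 'I_n) :
  t1 != t2 -> t1 != j -> t2 != j ->
  t1 \notin K.1 :|: IK K -> t2 \notin K.1 :|: IK K -> j \notin K.1 :|: IK K ->
  j \notin \bigcup_(P <- canP K) P -> valid K (xor_dist t1 t2 j).
Proof.
move=> t12 t1j t2j t1_out t2_out j_out j_canP.
move: (t1_out) (t2_out) (j_out); rewrite !finset.in_setU !negb_or.
move=> /andP[t1C t1I] /andP[t2C t2I] /andP[jC jI].
have [canP_nil | canP_diffs] := canP_cases K.
  apply: xor_dist_valid_hit1 => //; apply: count_canP_nil => // [Q|]; last by rewrite !inE.
  by rewrite !finset.in_setD t1_out t2_out j_out.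
apply: xor_dist_valid_spread => //.
- by move: j_canP; rewrite canP_diffs mem_bigcup_seq !has_count count_diffs_mem.
- by move: t1I; rewrite mem_IK t1C -leqNgt.
- by move: t2I; rewrite mem_IK t2C -leqNgt.
Qed.

Section ImpliedCMI.
Variables (n : nat) (K K' : CMI n).
Hypothesis K_K' : cmi_implies K K'.

Lemma IK_subset : IK K' \subset IK K.
Proof.
apply/fintype.subsetP => d dI'; apply/negPn/negP => dI.
have d_neq0 : [set d] != finset.set0 by apply/set0Pn; exists d; rewrite inE.
have [copy_dist_d _] := copy_dist_rank d_neq0.
have disj_d (C : {set 'I_n}) : d \notin C -> C :&: [set d] = finset.set0.
  by move=> dC; apply/eqP; apply: contraNT dC; rewrite setI_set1_neq0.
have K_valid : valid K (copy_dist [set d]).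
  have [dC | dC] := boolP (d \in K.1).
    by apply: copy_dist_valid_meet => //; rewrite setI_set1_neq0.
  apply/(copy_dist_validE d_neq0 (disj_d _ dC)).
  by rewrite (eq_count (fun Q => setI_set1_neq0 Q d)) leqNgt; move: dI; rewrite mem_IK dC.
move: dI'; rewrite mem_IK => /andP[dC' d_rep'].
move/(copy_dist_validE d_neq0 (disj_d _ dC')): (K_K' copy_dist_d K_valid).
by rewrite (eq_count (fun Q => setI_set1_neq0 Q d)) leqNgt d_rep'.
Qed.

Lemma RKK_implied (K'' : CMI n) : RKK K K' = Some K'' ->
  K'' = (K'.1 :\: IK K, diffs (IK K) (canP K')) /\ (1 < size (diffs (IK K) (canP K')))%N.
Proof.
have /eqP D0 : IK K' :\: IK K == finset.set0 by rewrite finset.setD_eq0 IK_subset.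
by rewrite /RKK D0 eqxx /=; case: leqP => // size_gt1 [<-].
Qed.

End ImpliedCMI.

Lemma hitting_pair_canP n (K K' : CMI n) : (1 < size (diffs (IK K) (canP K')))%N ->
  exists t1 t2, [/\ t1 != t2, t1 \notin K'.1 :|: IK K, t2 \notin K'.1 :|: IK K
    & 1 < count (fun Q : {set 'I_n} => (t1 \in Q) || (t2 \in Q)) K'.2]%N.
Proof.
have [-> // | ->] := canP_cases K'; rewrite diffs_diffs => /hitting_pair_diffs[t1 [t2 []]].
rewrite !finset.in_setU !negb_or => /andP[/andP[t1C' t1I'] t1I] /andP[/andP[t2C' t2I'] t2I] hit.
exists t1, t2; split; rewrite ?finset.in_setU ?negb_or ?t1C' ?t2C' //.
apply: contraNneq t1I' => t12; rewrite mem_IK t1C'; rewrite -t12 in hit.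
by rewrite (eq_count (fun Q : {set 'I_n} => orbb (t1 \in Q))) in hit.
Qed.
Section HittingPair.
Variables (n : nat) (K K' : CMI n) (t1 t2 : 'I_n).
Hypotheses (K_K' : cmi_implies K K') (t12 : t1 != t2).
Hypotheses (t1_out : t1 \notin K'.1 :|: IK K) (t2_out : t2 \notin K'.1 :|: IK K).
Hypothesis hit : (1 < count (fun Q : {set 'I_n} => (t1 \in Q) || (t2 \in Q)) K'.2)%N.

Lemma cond_subset : K.1 \subset K'.1.
Proof.
move: t1_out t2_out; rewrite !finset.in_setU !negb_or => /andP[t1C' _] /andP[t2C' _].
apply/fintype.subsetP => c cC; apply/negPn/negP => cC'.
have W_neq0 : [set c; t1; t2] != finset.set0 by apply/set0Pn; exists c; rewrite !inE eqxx.
have [copy_dist_W _] := copy_dist_rank W_neq0.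
have K_valid : valid K (copy_dist [set c; t1; t2]).
  by apply: copy_dist_valid_meet => //; apply/set0Pn; exists c; rewrite !inE cC eqxx.
have C'W : K'.1 :&: [set c; t1; t2] = finset.set0.
  apply/setP => i; rewrite !inE; apply/negbTE/andP => -[iC' /orP[/orP[] |] /eqP ei];
  by move: iC'; rewrite ei; apply/negP.
move/(copy_dist_validE W_neq0 C'W): (K_K' copy_dist_W K_valid); apply/negP; rewrite -ltnNge.
apply: leq_trans hit _; apply: sub_count => Q /orP[] tQ; apply/set0Pn;
  [exists t1 | exists t2]; by rewrite !inE tQ eqxx ?orbT.
Qed.

Lemma mem_canP_of_cond x : x \in K'.1 -> x \notin K.1 :|: IK K ->
  x \in \bigcup_(P <- canP K) P.
Proof.
move=> xC' x_out; apply/negPn/negP => x_canP.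
move: (t1_out) (t2_out); rewrite !finset.in_setU !negb_or => /andP[t1C' t1I] /andP[t2C' t2I].
have t_out t : t \notin K'.1 -> t \notin IK K -> t \notin K.1 :|: IK K.
  move=> tC' tI; rewrite finset.in_setU negb_or tI andbT.
  by apply: contra tC'; apply: (fintype.subsetP cond_subset).
have [tx1 tx2] : t1 != x /\ t2 != x.
  by split; [apply: contraNneq t1C' => -> | apply: contraNneq t2C' => ->].
have [xor_dist_t _] := xor_dist_rank t12 tx1 tx2.
apply: (xor_dist_invalid t12 tx1 tx2 t1C' t2C' xC' hit); apply: K_K' xor_dist_t _.
exact: xor_dist_valid_canP t12 tx1 tx2 (t_out _ t1C' t1I) (t_out _ t2C' t2I) x_out x_canP.
Qed.
End HittingPair.

Theorem mainTheorem9 (n : nat) (K K' : CMI n) :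
  ~ degenerate K -> ~ degenerate K' ->
  cmi_implies K K' ->
  forall K'' : CMI n, RKK K K' = Some K'' ->
  let C := canC K in
  let S := C :|: \bigcup_(P <- canP K) P in
  let C'' := canC K'' in
  let P'' := \bigcup_(P <- canP K'') P in
  C \subset C'' /\ C'' \subset S :\: P''.
Proof.
move=> _ _ K_K' K'' /(RKK_implied K_K') [-> /hitting_pair_canP[t1 [t2 [t12 t1_out t2_out hit]]]].
have C_C' := cond_subset K_K' t1_out t2_out hit.
rewrite /canC /=; split; apply/fintype.subsetP => x.
  move=> xC; rewrite finset.in_setD (fintype.subsetP C_C') // andbT.
  by move: xC; apply: contraL; rewrite mem_IK => /andP[].
rewrite !finset.in_setD finset.in_setU => /andP[xI xC'].
rewrite (contraTN (@canP_avoid _ _ x)) /= ?finset.in_setD ?xI //.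
have [// | xC] := boolP (x \in K.1).
by apply: (mem_canP_of_cond K_K' t12 t1_out t2_out hit xC'); rewrite finset.in_setU negb_or xC.
Qed.
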